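(* Let $C\subseteq\mathbb{F}_q^{2n}$ be a symplectic self-orthogonal $\mathbb F_q$-linear code of dimension $n-k$ (so that $Q(C)$ is an $[[n,k]]_q$ stabilizer code), and let $\emptyset\neq I\subsetneq J\subseteq\{1,\dots,n\}$. Assume $\mathrm{swt}(C)\geq|I|+1$. If \[n+k-2|J|+2|I|>0\quad\text{and}\quad \mathrm{gsw}_{\,n+k-2|J|+2|I|}\left(C^{\perp_s}\right)\geq n-|J|+1,\] then $\sigma_I\left[\pi_J\left(C^{\perp_s}\right)\right]\neq\sigma_I(C)$.
   Context: Vectors of $\mathbb{F}_q^{2n}$ are written $(\mathbf a|\mathbf b)$, coordinate pair $(a_j,b_j)$ indexed by $j\in\{1,\dots,n\}$. Symplectic form $(\mathbf a|\mathbf b)\cdot_s(\mathbf c|\mathbf d)=\mathbf a\cdot\mathbf d-\mathbf b\cdot\mathbf c$; $C^{\perp_s}$ its dual; $C$ symplectic self-orthogonal if $C\subseteq C^{\perp_s}$. Symplectic weight of $(\mathbf a|\mathbf b)$: $\#\{j:(a_j,b_j)\ne(0,0)\}$; $\mathrm{swt}(D)$ is the minimum symplectic weight of a nonzero vector of $D$. For $R\subseteq\{1,\dots,n\}$: $\pi_R(\mathbf a|\mathbf b)=(a_j|b_j)_{j\in R}$, puncturing $\pi_R(D)=\{\pi_R(\mathbf y):\mathbf y\in D\}$, shortening $\sigma_R(D)=\{\pi_R(\mathbf y):\mathbf y=(\mathbf a|\mathbf b)\in D,\ \mathrm{supp}(\mathbf a)\cup\mathrm{supp}(\mathbf b)\subseteq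 R\}$; the shortening at $I$ of a code with coordinate pairs indexed by $J\supseteq I$ is defined the same way. For an $\mathbb F_q$-linear $D\subseteq\mathbb F_q^{2n}$ and $1\le t\le\dim D$, the $t$-th generalized symplectic weight is $\mathrm{gsw}_t(D)=\min\{|R|:R\subseteq\{1,\dots,n\},\ \dim\sigma_R(D)\ge t\}$. *)

From HB Require Import structures.
From mathcomp Require Import all_boot all_order all_algebra.
Set Implicit Arguments. Unset Strict Implicit. Unset Printing Implicit Defensive.
Import GRing.Theory.
Local Open Scope ring_scope.

Section Symplectic.
Variables (F : finFieldType) (n : nat).

(* A vector (a|b) of F_q^{2n}: the pair of row vectors a, b. *)
Definition svec := ('rV[F]_n * 'rV[F]_n)%type.

Definition sympl (x y : svec) : F :=
  \sum_(j < n) (x.1 0 j * y.2 0 j - x.2 0 j * y.1 0 j).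

Definition sdual (C : {vspace svec}) : {vspace svec} :=
  <<[seq y <- enum {: svec} | [forall x : svec, (x \in C) ==> (sympl x y == 0%R)]]>>%VS.

Definition ssupp (x : svec) : {set 'I_n} :=
  [set j | (x.1 0 j != 0) || (x.2 0 j != 0)].
Definition swt (x : svec) : nat := #|ssupp x|.

(* pi_R, represented by zeroing the coordinate pairs outside R *)
Definition sproj (R : {set 'I_n}) (x : svec) : svec :=
  (\row_j (if j \in R then x.1 0 j else 0), \row_j (if j \in R then x.2 0 j else 0)).

Definition spuncture (R : {set 'I_n}) (D : {vspace svec}) : {vspace svec} :=
  <<[seq sproj R y | y <- enum {: svec} & y \in D]>>%VS.

Definition sshorten (R : {set 'I_n}) (D : {vspace svec}) : {vspace svec} :=
  <<[seq sproj R y | y <- enum {: svec} & (y \in D) && (ssupp y \subset R)]>>%VS.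

Definition gsw (t : nat) (D : {vspace svec}) : nat :=
  \big[minn/n]_(R : {set 'I_n} | (t <= \dim (sshorten R D))%N) #|R|.

Definition swt_ge (D : {vspace svec}) (d : nat) : Prop :=
  forall x : svec, x \in D -> x != 0 -> (d <= swt x)%N.

End Symplectic.

(* Let D be the symplectic dual of C, so that dim D >= n + k, and let W be the
   subspace of D vanishing on J \ I; then dim W >= dim D - 2 |J \ I| >= t.  The
   bound on gsw_t(D) says that the vectors of D supported outside J span fewer
   than t dimensions, so some y in W has a coordinate in J, necessarily in I.
   Then pi_J(y) is a nonzero vector of pi_J(D) supported in I, hence lies in
   sigma_I(pi_J(D)), whereas sigma_I(C) = 0 because every nonzero codeword of C
   has symplectic weight larger than |I|. *)

From HB Require Import structures.
From mathcomp Require Import all_boot all_order all_algebra.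
From mathcomp Require Import ring zify.
Set Implicit Arguments. Unset Strict Implicit. Unset Printing Implicit Defensive.
Import Order.TTheory GRing.Theory.
Local Open Scope ring_scope.

Section SymplecticCodes.
Variables (F : finFieldType) (n : nat).
Implicit Types (x y : svec F n) (C D : {vspace svec F n}) (I J R S : {set 'I_n}).

Lemma svec_eq x y :
  (forall j, x.1 0 j = y.1 0 j) -> (forall j, x.2 0 j = y.2 0 j) -> x = y.
Proof.
case: x y => [x1 x2] [y1 y2] /= eq1 eq2.
by congr pair; apply/rowP => j; rewrite ?eq1 ?eq2.
Qed.

Lemma sproj1E R x j : (sproj R x).1 0 j = if j \in R then x.1 0 j else 0.
Proof. by rewrite mxE. Qed.

Lemma sproj2E R x j : (sproj R x).2 0 j = if j \in R then x.2 0 j else 0.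
Proof. by rewrite mxE. Qed.

Lemma sproj_is_linear R : linear (sproj R : svec F n -> svec F n).
Proof.
move=> a x y; apply: svec_eq => j; rewrite !mxE /=;
  by case: ifP; rewrite ?mulr0 ?addr0.
Qed.

HB.instance Definition _ R :=
  GRing.isLinear.Build F (svec F n) (svec F n) *:%R (sproj R) (sproj_is_linear R).

Lemma ssupp0 : ssupp (0 : svec F n) = set0.
Proof. by apply/setP => j; rewrite !inE !mxE eqxx. Qed.

Lemma ssupp_sproj R x : ssupp (sproj R x) = R :&: ssupp x.
Proof.
by apply/setP => j; rewrite !inE sproj1E sproj2E; case: (j \in R); rewrite ?eqxx.
Qed.

Lemma sproj_id R x : ssupp x \subset R -> sproj R x = x.
Proof.
move=> suppR; have vanish j : j \notin R -> x.1 0 j = 0 /\ x.2 0 j = 0.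
  move=> jR; have := contra (subsetP suppR j) jR.
  by rewrite inE negb_or !negbK => /andP[/eqP-> /eqP->].
by apply: svec_eq => j; rewrite ?sproj1E ?sproj2E; case: ifPn => // /vanish[].
Qed.

Lemma mem_spuncture R D y : y \in D -> sproj R y \in spuncture R D.
Proof. by move=> yD; apply/memv_span/map_f; rewrite mem_filter yD mem_enum memvf. Qed.

Lemma mem_sshorten R D y : y \in D -> ssupp y \subset R -> y \in sshorten R D.
Proof.
move=> yD suppR; rewrite -(sproj_id suppR); apply/memv_span/map_f.
by rewrite mem_filter yD suppR mem_enum memvf.
Qed.

Lemma sshorten_eq0 R D : swt_ge D #|R|.+1 -> sshorten R D = 0%VS.
Proof.
move=> swtD; apply/eqP; rewrite -subv0; apply/span_subvP => v /mapP[x].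
rewrite mem_filter => /andP[/andP[xD suppR] _] ->; rewrite memv0.
have [-> | x0] := eqVneq x 0; first by rewrite linear0.
by have := leq_trans (swtD x xD x0) (subset_leq_card suppR); rewrite ltnn.
Qed.

Lemma gsw_le t R D : (t <= \dim (sshorten R D))%N -> (gsw t D <= #|R|)%N.
Proof. by move=> tR; rewrite /gsw -minEnat -leEnat; apply: bigmin_le_cond. Qed.

Lemma symplC x y : sympl x y = - sympl y x.
Proof.
rewrite /sympl -sumrN; apply: eq_bigr => j _.
by rewrite opprB [x.1 0 j * _]mulrC [x.2 0 j * _]mulrC.
Qed.

Lemma sympl_is_linear x : linear (sympl x : svec F n -> F^o).
Proof.
move=> a y z; rewrite /sympl scaler_sumr -big_split; apply: eq_bigr => j _.
by rewrite !mxE /= -[a *: _]/(a * _); ring.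
Qed.

HB.instance Definition _ x :=
  GRing.isLinear.Build F (svec F n) F^o *:%R (sympl x) (sympl_is_linear x).

Definition sympl_coords C y : 'rV[F]_(\dim C) := \row_i sympl (vbasis C)`_i y.

Lemma sympl_coords_is_linear C : linear (sympl_coords C).
Proof. by move=> a y z; apply/rowP => i; rewrite !mxE linearP. Qed.

HB.instance Definition _ C := GRing.isLinear.Build F (svec F n) 'rV[F]_(\dim C) *:%R
  (sympl_coords C) (sympl_coords_is_linear C).

Lemma lker_sympl_coords C : (lker (linfun (sympl_coords C)) <= sdual C)%VS.
Proof.
apply/subvP => y; rewrite memv_ker lfunE => /eqP coords0.
apply: memv_span; rewrite mem_filter mem_enum memvf andbT.
apply/forallP => x; apply/implyP => /coord_vbasis ->.
rewrite symplC linear_sum big1 ?oppr0 // => i _.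
have := congr1 (fun v : 'rV_(\dim C) => v 0 i) coords0; rewrite !mxE => basis_i.
by rewrite linearZ /= symplC basis_i oppr0 scaler0.
Qed.

Lemma dim_row m : dim 'rV[F]_m = m.
Proof. by rewrite dim_matrix mul1r. Qed.

Lemma dim_sdual C : (n + n <= \dim C + \dim (sdual C))%N.
Proof.
set f := linfun (sympl_coords C).
have := limg_ker_dim f fullv; rewrite capfv dimvf /dim /= !dim_row => <-.
rewrite addnC leq_add ?(dimvS (lker_sympl_coords C)) //.
by apply: leq_trans (dimvS (subvf _)) _; rewrite dimvf dim_row.
Qed.

Lemma sproj_sum_delta S x : sproj S x =
  \sum_(j in S) (x.1 0 j *: (delta_mx 0 j, 0) + x.2 0 j *: (0, delta_mx 0 j)).
Proof.
have row_restrict (u : 'rV[F]_n) :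
    \row_j (if j \in S then u 0 j else 0) = \sum_(j in S) u 0 j *: delta_mx 0 j.
  rewrite [LHS]row_sum_delta [RHS]big_mkcond; apply: eq_bigr => j _.
  by rewrite mxE; case: ifP; rewrite ?scale0r.
rewrite [RHS]surjective_pairing /sproj !row_restrict.
by congr pair; rewrite raddf_sum; apply: eq_bigr => j _ /=; rewrite scaler0 ?addr0 ?add0r.
Qed.

Lemma dim_img_sproj S D : (\dim (linfun (sproj S) @: D) <= #|S| + #|S|)%N.
Proof.
pose unit_vecs : seq (svec F n) :=
  [seq (delta_mx 0 j, 0) | j <- enum S] ++ [seq (0, delta_mx 0 j) | j <- enum S].
have img_unit_vecs : (linfun (sproj S) @: D <= <<unit_vecs>>)%VS.
  apply/subvP => _ /memv_imgP[x _ ->]; rewrite lfunE /= sproj_sum_delta.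
  apply: memv_suml => j jS; apply: memvD; apply/memvZ/memv_span;
    by rewrite mem_cat map_f ?orbT ?mem_enum.
rewrite (leq_trans (dimvS img_unit_vecs)) // (leq_trans (dim_span _)) //.
by rewrite size_cat !size_map cardE.
Qed.

Lemma dim_cap_lker_sproj S D :
  (\dim D <= \dim (D :&: lker (linfun (sproj S))) + 2 * #|S|)%N.
Proof.
rewrite -{1}(limg_ker_dim (linfun (sproj S)) D) leq_add2l mul2n -addnn.
exact: dim_img_sproj.
Qed.

Lemma sshorten_spuncture_neq0 I J D y :
  y \in D -> J :&: ssupp y \subset I -> J :&: ssupp y != set0 ->
  sshorten I (spuncture J D) != 0%VS.
Proof.
move=> yD suppI suppJ; apply: contra suppJ => /eqP short0.
have : sproj J y \in sshorten I (spuncture J D).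
  by apply: mem_sshorten; [exact: mem_spuncture | rewrite ssupp_sproj].
by rewrite short0 memv0 => /eqP y0; rewrite -ssupp_sproj y0 ssupp0.
Qed.

Lemma sshorten_spuncture_neq0_dim I J D :
  (\dim (sshorten (~: J) D) < \dim (D :&: lker (linfun (sproj (J :\: I)))))%N ->
  sshorten I (spuncture J D) != 0%VS.
Proof.
move=> dim_lt.
have /subvPn[y] : ~~ (D :&: lker (linfun (sproj (J :\: I))) <= sshorten (~: J) D)%VS.
  by apply: contraTN dim_lt => /dimvS; rewrite leqNgt.
rewrite memv_cap memv_ker lfunE /= => /andP[yD /eqP vanish] y_notin.
apply: (sshorten_spuncture_neq0 yD).
  apply/subsetP => j; rewrite in_setI => /andP[jJ jy]; apply/contraT => jI.
  have : j \in ssupp (sproj (J :\: I) y).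
    by rewrite ssupp_sproj in_setI in_setD jI jJ jy.
  by rewrite vanish ssupp0 inE.
apply: contra y_notin => Jy0; apply: (mem_sshorten yD).
by rewrite -disjoints_subset disjoint_sym -setI_eq0.
Qed.

End SymplecticCodes.

Theorem proposition21 (F : finFieldType) (n k : nat) (C : {vspace svec F n})
    (I J : {set 'I_n}) :
  (C <= sdual C)%VS ->
  (k <= n)%N ->
  \dim C = (n - k)%N ->
  I != set0 ->
  I \proper J ->
  swt_ge C #|I|.+1 ->
  (2 * #|J| < n + k + 2 * #|I|)%N ->
  ((n - #|J|).+1 <= gsw (n + k + 2 * #|I| - 2 * #|J|) (sdual C))%N ->
  sshorten I (spuncture J (sdual C)) != sshorten I C.
Proof.
move=> _ le_kn dimC _ ltIJ swtC _ gswD.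
set t := (n + k + 2 * #|I| - 2 * #|J|)%N in gswD.
have subIJ := proper_sub ltIJ.
rewrite (sshorten_eq0 swtC); apply: sshorten_spuncture_neq0_dim.
have dim_short : (\dim (sshorten (~: J) (sdual C)) < t)%N.
  rewrite ltnNge; apply/negP => /gsw_le le_gsw.
  by have := cardsC J; rewrite card_ord; lia.
apply: (leq_trans dim_short).
have := dim_cap_lker_sproj (J :\: I) (sdual C).
have := dim_sdual C; have := subset_leq_card subIJ.
rewrite /t cardsD (setIidPr subIJ) dimC; clear -le_kn; lia.
Qed.
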